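(* Let $T$ be a valid physical transformation of a system of $N$ elementary toy systems that is non-entangling and preserves the amount of information stored in each elementary subsystem, i.e. for every valid epistemic state $E$ and every $i\in\{1,\dots,N\}$ the marginal of $T(E)$ on subsystem $i$ has the same number of ontic states as the marginal of $E$ on subsystem $i$. Then $T$ is local: there exist permutations $T_1,\dots,T_N$ of $\{1,2,3,4\}$ such that $T(o_1,\dots,o_N) = (T_1(o_1),\dots,T_N(o_N))$ for all ontic states.
   Context: In Spekkens' toy theory, ontic states of $N$ elementary systems are elements of $\{1,2,3,4\}^N$, and an epistemic state is a set of ontic states (its ontic basis); only certain epistemic states are valid (those satisfying the knowledge balance principle globally and on all subsystems; equivalently, those equal to the set of ontic states fixed by some toy stabilizer group). The marginal of an epistemic state on subsystem $i$ is its projection onto the $i$-th coordinate. A physical transformation is a map $T$ on ontic states, acting on epistemic states by $T(E) = \{T(o): o\in E\}$; it is valid if it maps valid epistemic states to valid epistemic states, and valid transformations are permutations of the ontic states. A product state with respect to a division of the systems into groups $A_1,\dots,A_k$ is a Cartesian product of valid epistemic states on the groups. A transformation is non-entangling if, for every division into groups $A_1,\dots,A_k$, it maps every product state with respect to that division to a product state with respect to the same division. *)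

(* Spekkens' toy theory via Pusey's toy stabilizer formalism. *)
From mathcomp Require Import all_boot all_fingroup.
Set Implicit Arguments. Unset Strict Implicit. Unset Printing Implicit Defensive.

(* Ontic states of one elementary system: 'I_4, where k : 'I_4 stands for the
   ontic state k+1 of {1,2,3,4}.  Ontic states of N systems: functions 'I_N -> 'I_4. *)
Definition ontic (N : nat) := {ffun 'I_N -> 'I_4}.

Definition epistemic (N : nat) := {set ontic N}.

(* Single-system toy operator labels: 0 = I, 1 = X, 2 = Y, 3 = Z, with
   value tables (on ontic states 1,2,3,4)
     I = (+,+,+,+), X = (+,-,+,-), Y = (+,-,-,+), Z = (+,+,-,-).
   [label_neg l o] is true iff the value of l at ontic state o is -1. *)
Definition label_neg (l o : 'I_4) : bool :=
  match val l with
  | 1 => odd o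
  | 2 => (val o == 1) || (val o == 2)
  | 3 => 2 <= val o
  | _ => false
  end.

(* Toy operators on N systems: a sign (true = minus) and a tensor product of labels. *)
Definition toyop (N : nat) := (bool * {ffun 'I_N -> 'I_4})%type.

Definition toy_neg (N : nat) (g : toyop N) (o : ontic N) : bool :=
  g.1 (+) \big[addb/false]_(i < N) label_neg (g.2 i) (o i).

(* Product of single-system labels (Klein four group: XY = Z, XZ = Y, YZ = X). *)
Definition klein (a b : 'I_4) : 'I_4 :=
  if val a == 0 then b else if val b == 0 then a
  else if a == b then inord 0 else inord (6 - val a - val b).

Definition toymul (N : nat) (g h : toyop N) : toyop N :=
  (g.1 (+) h.1, [ffun i => klein (g.2 i) (h.2 i)]).

(* Two toy operators commute iff (as Pauli operators) they anticommute on an even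
   number of sites. *)
Definition toy_commute (N : nat) (g h : toyop N) : bool :=
  ~~ odd #|[set i : 'I_N | [&& val (g.2 i) != 0, val (h.2 i) != 0 & g.2 i != h.2 i]]|.

Definition toy_id (N : nat) : toyop N := (false, [ffun => ord0]).
Definition toy_minus_id (N : nat) : toyop N := (true, [ffun => ord0]).

Definition toy_stabilizer (N : nat) (S : {set toyop N}) : Prop :=
  [/\ toy_id N \in S,
      {in S &, forall g h, toymul g h \in S},
      {in S &, forall g h, toy_commute g h} &
      toy_minus_id N \notin S].

Definition fixed_set (N : nat) (S : {set toyop N}) : epistemic N :=
  [set o | [forall g in S, ~~ toy_neg g o]].

Definition supported_in (N : nat) (B : {set 'I_N}) (g : toyop N) : bool :=
  [forall i, (i \notin B) ==> (val (g.2 i) == 0)].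

(* A valid epistemic state of the subsystem B, embedded as a subset of the
   global ontic space (i.e. as F x (all ontic states of the complement)). *)
Definition valid_on (N : nat) (B : {set 'I_N}) (E : epistemic N) : Prop :=
  exists S : {set toyop N},
    [/\ toy_stabilizer S, {in S, forall g, supported_in B g} & E = fixed_set S].

Definition valid (N : nat) (E : epistemic N) : Prop := valid_on [set: 'I_N] E.

Definition marginal (N : nat) (i : 'I_N) (E : epistemic N) : {set 'I_4} :=
  [set (o : ontic N) i | o in E].

Definition act (N : nat) (T : {perm ontic N}) (E : epistemic N) : epistemic N :=
  T @: E.

Definition valid_transformation (N : nat) (T : {perm ontic N}) : Prop :=
  forall E : epistemic N, valid E -> valid (act T E).

Definition product_state (N : nat) (P : {set {set 'I_N}}) (E : epistemic N) : Prop :=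
  exists F : {set 'I_N} -> epistemic N,
    (forall B, B \in P -> valid_on B (F B)) /\
    E = [set o | [forall B in P, o \in F B]].

Definition non_entangling (N : nat) (T : {perm ontic N}) : Prop :=
  forall P : {set {set 'I_N}}, partition P [set: 'I_N] ->
  forall E : epistemic N, product_state P E -> product_state P (act T E).

Definition preserves_local_information (N : nat) (T : {perm ontic N}) : Prop :=
  forall (E : epistemic N) (i : 'I_N), valid E ->
    #|marginal i (act T E)| = #|marginal i E|.

From mathcomp Require Import all_boot all_fingroup.

Set Implicit Arguments. Unset Strict Implicit. Unset Printing Implicit Defensive.

(* A valid state of a single system i is a cylinder {o | o_i \in A}.  Such a
   cylinder is a product state for the division into singletons, so its image
   under a non-entangling T is a box; preservation of local information forces
   the box to be full off i, i.e. T maps cylinders over i to cylinders over i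
   of the same size.  Intersecting the images of the two-element cylinders
   {o | Z(o_i) = Z(a)} and {o | X(o_i) = X(a)} shows that T maps the cylinder
   {o | o_i = a} onto some {o | o_i = t}, so the i-th output of T depends only
   on o_i. *)

Section Cylinders.
Variable N : nat.

Definition cylinder (i : 'I_N) (A : {set 'I_4}) : epistemic N :=
  [set o : ontic N | o i \in A].

Definition box (C : 'I_N -> {set 'I_4}) : epistemic N :=
  [set o : ontic N | [forall j, o j \in C j]].

Definition singletons : {set {set 'I_N}} := [set [set j] | j : 'I_N].

Lemma cylinderI i A B : cylinder i A :&: cylinder i B = cylinder i (A :&: B).
Proof. by apply/setP => o; rewrite !inE. Qed.

Lemma marginal_cylinder i A : marginal i (cylinder i A) = A.
Proof.
apply/setP => x; apply/imsetP/idP => [[o] | Ax]; first by rewrite inE => Ao ->.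
by exists [ffun=> x]; rewrite ?inE ffunE.
Qed.

Lemma cylinder_inj i : injective (cylinder i).
Proof. exact: can_inj (marginal_cylinder i). Qed.

Lemma marginal_cylinder_neq i j A :
  j != i -> A != set0 -> marginal j (cylinder i A) = setT.
Proof.
move=> ji /set0Pn[a Aa]; apply/setP => y; rewrite inE; apply/imsetP.
exists [ffun k => if k == i then a else y]; rewrite ?inE ffunE ?eqxx //.
by rewrite (negbTE ji).
Qed.

Lemma marginal_box C o j : o \in box C -> marginal j (box C) = C j.
Proof.
rewrite inE => /forallP Co.
apply/setP => x; apply/imsetP/idP => [[o'] | Cx].
  by rewrite inE => /forallP Co' ->.
exists [ffun k => if k == j then x else o k]; last by rewrite ffunE eqxx.
by rewrite inE; apply/forallP => k; rewrite ffunE; case: eqP => [-> | _].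
Qed.

Lemma box_cylinder C i :
  (forall j, j != i -> C j = setT) -> box C = cylinder i (C i).
Proof.
move=> C_full; apply/setP => o; rewrite !inE; apply/forallP/idP => [/(_ i) // | Coi j].
by have [-> // | ji] := eqVneq j i; rewrite C_full ?inE.
Qed.

Lemma partition_singletons : partition singletons [set: 'I_N].
Proof.
apply/and3P; split.
- apply/eqP/setP => x; rewrite inE; apply/bigcupP.
  by exists [set x]; [exact: imset_f | exact: set11].
- apply/trivIsetP => _ _ /imsetP[x _ ->] /imsetP[y _ ->] xy.
  by rewrite disjoints1 inE; apply: contraNneq xy => ->.
- by apply/imsetP => -[x _ /setP/(_ x)]; rewrite !inE eqxx.
Qed.

End Cylinders.

Lemma cardsI_lt (T : finType) (A B : {set T}) :
  #|A| = #|B| -> A != B -> #|A :&: B| < #|A|.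
Proof.
move=> AB neqAB; apply: proper_card; rewrite properE subsetIl subsetI subxx /=.
by apply: contra neqAB => sAB; rewrite eqEcard sAB AB /=.
Qed.

Section ToyStabilizers.
Variable N : nat.
Implicit Types (g h : toyop N) (B : {set 'I_N}) (E : epistemic N).

Lemma toy_neg_id o : toy_neg (toy_id N) o = false.
Proof. by rewrite /toy_neg big1 // => k _; rewrite ffunE. Qed.

Lemma toy_neg_supported1 j g o :
  supported_in [set j] g -> toy_neg g o = g.1 (+) label_neg (g.2 j) (o j).
Proof.
move=> /forallP g_j; rewrite /toy_neg (bigD1 j) //= big1 ?addbF // => k kj.
by move: (g_j k); rewrite in_set1 kj /=; case: (g.2 k) => -[].
Qed.

Lemma toymul1g g : toymul (toy_id N) g = g.
Proof. by case: g => s f; congr (_, _); apply/ffunP => i; rewrite !ffunE. Qed.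

Lemma toymulg1 g : toymul g (toy_id N) = g.
Proof.
case: g => s f; rewrite /toymul addbF; congr (_, _); apply/ffunP => i.
by rewrite !ffunE /klein; case: ifP => // /eqP fi0; apply: val_inj.
Qed.

Lemma toymulgg g : toymul g g = toy_id N.
Proof.
case: g => s f; rewrite /toymul addbb; congr (_, _); apply/ffunP => i.
by rewrite !ffunE /klein eqxx; case: (f i) => -[|m] lt_m4; apply: val_inj; rewrite //= inordK.
Qed.

Lemma toy_commuteC g h : toy_commute g h = toy_commute h g.
Proof.
rewrite /toy_commute; congr (~~ odd _); apply: eq_card => i.
by rewrite !inE andbCA [h.2 i == _]eq_sym.
Qed.

Lemma toy_commute1g g : toy_commute (toy_id N) g.
Proof.
rewrite /toy_commute (_ : [set _ | _] = set0) ?cards0 //.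
by apply/setP => i; rewrite !inE ffunE.
Qed.

Lemma toy_commutegg g : toy_commute g g.
Proof.
rewrite /toy_commute (_ : [set _ | _] = set0) ?cards0 //.
by apply/setP => i; rewrite !inE eqxx !andbF.
Qed.

Lemma toy_stabilizer_pair g : g != toy_minus_id N -> toy_stabilizer [set toy_id N; g].
Proof.
move=> g_neq; split.
- by rewrite !inE eqxx.
- move=> _ _ /set2P[]-> /set2P[]->;
    by rewrite ?toymul1g ?toymulg1 ?toymulgg !inE eqxx ?orbT.
- move=> _ _ /set2P[]-> /set2P[]->;
    by rewrite ?toy_commute1g ?toy_commutegg // toy_commuteC toy_commute1g.
- by rewrite !inE negb_or [_ == g]eq_sym g_neq.
Qed.

Lemma fixed_set_pair g : fixed_set [set toy_id N; g] = [set o | ~~ toy_neg g o].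
Proof.
apply/setP => o; rewrite !inE; apply/forallP/idP => [/(_ g) | g_o h].
  by rewrite !inE eqxx orbT.
by apply/implyP => /set2P[]->; rewrite ?toy_neg_id.
Qed.

Lemma supported_inS B B' g : B \subset B' -> supported_in B g -> supported_in B' g.
Proof.
move=> sBB' /forallP g_B; apply/forallP => i; apply/implyP => iB'.
by apply: (implyP (g_B i)); apply: contra iB'; apply: (subsetP sBB').
Qed.

Lemma valid_onS B B' E : B \subset B' -> valid_on B E -> valid_on B' E.
Proof.
by move=> sBB' [S [S_stab S_B ->]]; exists S; split=> // g /S_B; apply: supported_inS.
Qed.

Lemma supported_in_id B : supported_in B (toy_id N).
Proof. by apply/forallP => k; rewrite ffunE implybT. Qed.

Lemma valid_on_setT B : valid_on B [set: ontic N].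
Proof.
exists [set toy_id N; toy_id N]; split.
- exact: toy_stabilizer_pair.
- by move=> _ /set2P[]->; apply: supported_in_id.
- by apply/setP => o; rewrite fixed_set_pair !inE toy_neg_id.
Qed.

Lemma valid_on1_cylinder j E : valid_on [set j] E -> E = cylinder j (marginal j E).
Proof.
case=> S [_ S_j ->].
set A := [set x : 'I_4 | [forall g in S, ~~ (g.1 (+) label_neg (g.2 j) x)]].
suff -> : fixed_set S = cylinder j A by rewrite marginal_cylinder.
apply/setP => o; rewrite !inE; apply: eq_forallb => g.
by case: (boolP (g \in S)) => //= gS; rewrite (toy_neg_supported1 _ (S_j g gS)).
Qed.

Lemma product_state_singletons E :
  product_state (singletons N) E -> exists C, E = box C.
Proof.
case=> F [F_valid ->]; exists (fun j => marginal j (F [set j])).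
have F_cyl j : F [set j] = cylinder j (marginal j (F [set j])).
  by apply/valid_on1_cylinder/F_valid/imset_f.
apply/setP => o; rewrite !inE; apply/forallP/forallP => [o_F j | o_C B].
  by have := o_F [set j]; rewrite imset_f //= {1}F_cyl inE.
by apply/implyP => /imsetP[j _ ->]; rewrite F_cyl inE.
Qed.

Lemma product_state_cylinder i A :
  valid_on [set i] (cylinder i A) -> product_state (singletons N) (cylinder i A).
Proof.
move=> A_valid; exists (fun B => if B == [set i] then cylinder i A else setT); split.
  by move=> B _; case: eqP => [-> | _]; [exact: A_valid | exact: valid_on_setT].
apply/setP => o; rewrite !inE; apply/idP/forallP => [o_A B | /(_ [set i])].
  by apply/implyP => _; case: eqP; rewrite ?inE.
by rewrite imset_f // eqxx inE.
Qed.

End ToyStabilizers.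

Definition label_X : 'I_4 := Ordinal (isT : 1 < 4).
Definition label_Z : 'I_4 := Ordinal (isT : 3 < 4).

Definition label_fiber (l a : 'I_4) : {set 'I_4} :=
  [set x | label_neg l x == label_neg l a].

Lemma card_label_fiber l a : val l != 0 -> #|label_fiber l a| = 2.
Proof.
rewrite -sum1_card big_mkcond /= !big_ord_recr big_ord0 /= !inE /label_neg /=.
by case: l => -[|[|[|[|l]]]] //= _ _; case: a => -[|[|[|[|a]]]].
Qed.

Lemma label_fiberZX a : label_fiber label_Z a :&: label_fiber label_X a = [set a].
Proof.
apply/setP => x; rewrite !inE -val_eqE /label_neg /=.
by case: a => -[|[|[|[|a]]]] //= _; case: x => -[|[|[|[|x]]]].
Qed.

Section SiteOperators.
Variable N : nat.
Implicit Types (i : 'I_N) (o : ontic N).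

Definition site_op i (s : bool) (l : 'I_4) : toyop N :=
  (s, [ffun k => if k == i then l else ord0]).

Lemma supported_in_site_op i s l : supported_in [set i] (site_op i s l).
Proof. by apply/forallP => k; rewrite ffunE inE; case: eqP. Qed.

Lemma toy_neg_site_op i s l o : toy_neg (site_op i s l) o = s (+) label_neg l (o i).
Proof. by rewrite (toy_neg_supported1 _ (supported_in_site_op i s l)) ffunE eqxx. Qed.

Lemma valid_on_label_fiber i l a :
  val l != 0 -> valid_on [set i] (cylinder i (label_fiber l a)).
Proof.
move=> l_nz; exists [set toy_id N; site_op i (label_neg l a) l]; split.
- apply: toy_stabilizer_pair; apply: contraNneq l_nz => -[_ /ffunP/(_ i)].
  by rewrite !ffunE eqxx => ->.
- by move=> _ /set2P[]->; [apply: supported_in_id | apply: supported_in_site_op].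
- apply/setP => o; rewrite fixed_set_pair !inE toy_neg_site_op.
  by case: (label_neg l a); case: (label_neg l (o i)).
Qed.

End SiteOperators.

Section LocalInformationPreservingMaps.
Variables (N : nat) (T : {perm ontic N}).
Hypotheses (T_ne : non_entangling T) (T_loc : preserves_local_information T).

Lemma image_cylinder i A :
  valid_on [set i] (cylinder i A) -> A != set0 ->
  exists2 C, T @: cylinder i A = cylinder i C & #|C| = #|A|.
Proof.
move=> A_valid /set0Pn[a Aa].
have [C TA] := product_state_singletons
  (T_ne (partition_singletons N) (product_state_cylinder A_valid)).
have TA_box : T [ffun=> a] \in box C by rewrite -TA imset_f // inE ffunE.
have card_C j : #|C j| = #|marginal j (cylinder i A)|.
  rewrite -(marginal_box j TA_box) -TA T_loc //.
  exact: valid_onS (subsetT _) A_valid.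
have C_full j : j != i -> C j = setT.
  move=> ji; apply/eqP; rewrite eqEcard subsetT card_C marginal_cylinder_neq ?leqnn //.
  by apply/set0Pn; exists a.
exists (C i); last by rewrite card_C marginal_cylinder.
by rewrite -(box_cylinder C_full) -TA.
Qed.

Lemma image_cylinder1 i a : exists t, T @: cylinder i [set a] = cylinder i [set t].
Proof.
have image_fiber l : val l != 0 -> exists2 C,
    T @: cylinder i (label_fiber l a) = cylinder i C & #|C| = 2.
  move=> l_nz; have fiber_nz : label_fiber l a != set0 by apply/set0Pn; exists a; rewrite inE.
  have [C TC cardC] := image_cylinder (valid_on_label_fiber i a l_nz) fiber_nz.
  by exists C; rewrite // cardC card_label_fiber.
have [CZ TZ cardZ] := image_fiber label_Z isT.
have [CX TX cardX] := image_fiber label_X isT.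
have Ta : T @: cylinder i [set a] = cylinder i (CZ :&: CX).
  rewrite -label_fiberZX -cylinderI imsetI ?TZ ?TX ?cylinderI //.
  exact: in2W perm_inj.
have CZX : CZ != CX.
  apply/eqP => CZ_CX.
  have fiberZX : label_fiber label_Z a = label_fiber label_X a.
    by apply/(cylinder_inj (i := i))/(imset_inj (@perm_inj _ T)); rewrite TZ TX CZ_CX.
  have := card_label_fiber a (isT : val label_X != 0).
  by have := label_fiberZX a; rewrite fiberZX setIid => ->; rewrite cards1.
have CZX_lt2 : #|CZ :&: CX| < 2.
  by have := cardsI_lt (etrans cardZ (esym cardX)) CZX; rewrite cardZ.
have CZX_gt0 : 0 < #|CZ :&: CX|.
  have : T [ffun=> a] \in cylinder i (CZ :&: CX) by rewrite -Ta imset_f // !inE ffunE.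
  by rewrite inE card_gt0 => Ta_i; apply/set0Pn; exists (T [ffun=> a] i).
have /cards1P[t CZX_t] : #|CZ :&: CX| == 1 by rewrite eqn_leq -ltnS CZX_lt2.
by exists t; rewrite Ta CZX_t.
Qed.

Lemma perm_coord_eq o o' i : (T o i == T o' i) = (o i == o' i).
Proof.
have [t Tt] := image_cylinder1 i (o i).
have T_cyl (o'' : ontic N) : o'' i = o i -> T o'' i = t.
  move=> o''_i; have : T o'' \in cylinder i [set t] by rewrite -Tt imset_f // !inE o''_i.
  by rewrite !inE => /eqP.
apply/eqP/eqP => [To_o' | o_o']; last by rewrite !T_cyl.
have : T o' \in T @: cylinder i [set o i] by rewrite Tt inE -To_o' T_cyl ?inE.
by rewrite mem_imset ?inE => [/eqP | ]; last exact: perm_inj.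
Qed.

End LocalInformationPreservingMaps.

Theorem mainTheorem9 (N : nat) (T : {perm ontic N}) :
  valid_transformation T ->
  non_entangling T ->
  preserves_local_information T ->
  exists Ts : 'I_N -> {perm 'I_4},
    forall o : ontic N, T o = [ffun i => Ts i (o i)].
Proof.
move=> _ T_ne T_loc.
pose f i a := T [ffun=> a] i.
have f_inj i : injective (f i).
  by move=> a b /eqP; rewrite perm_coord_eq // !ffunE => /eqP.
exists (fun i => perm (f_inj i)) => o; apply/ffunP => i.
by rewrite ffunE permE; apply/eqP; rewrite perm_coord_eq // ffunE.
Qed.
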